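(* Let $X$ be a topological space, let $Y$ be a functionally Hausdorff space, let $S$ be a dense subset of $X$ and let $f:S\to Y$ be continuous. Then the following are equivalent: (1) $f$ has a continuous extension to $X$; (2) for every family $\{A_\beta\}$ of closed subsets of $Y$ with $\bigcap_\beta A_\beta=\emptyset$ one has $\bigcap_\beta\overline{f^{-1}(A_\beta)}=\emptyset$ (closures in $X$), and for every open set $V$ of $Y$ the set $X_{\theta^\omega}(f^{-1}(V))$ is open in $X$.
   Context: A space is functionally Hausdorff if any two distinct points can be separated by a continuous real-valued function. $\mathcal N(x)$ is the set of open neighborhoods of $x$ in $X$. For a subset $A$ of $Y$ and an ordinal $\alpha>0$, an $\alpha$-hull of $A$ is an open set $U\supseteq A$ for which there exists a family $\{U_\beta\}_{\beta\le\alpha}$ of open sets containing $A$ with $\mathrm{cl}\,U_\beta\subseteq U_{\beta+1}$ whenever $\beta+1\le\alpha$ and $U=U_\alpha=\bigcup_{\beta\le\alpha}U_\beta$. For $M\subseteq Y$, $\mathrm{cl}_{\theta^\omega}M$ is the set of $y\in Y$ such that every $\omega$-hull $U$ of $y$ satisfies $\mathrm{cl}\,U\cap M\neq\emptyset$. For $V\subseteq Y$, $X_{\theta^\omega}(f^{-1}(V))$ is the set of points $x\in X$ with $\bigcap\{\mathrm{cl}_{\theta^\omega} f(P\cap S):P\in\mathcal N(x)\}\subseteq V$. *)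

From HB Require Import structures.
From mathcomp Require Import all_boot all_order all_algebra.
From mathcomp Require Import all_classical all_reals.
From mathcomp Require Import topology.
From mathcomp Require Import Rstruct Rstruct_topology.
From Stdlib Require Import Reals.

Set Implicit Arguments.
Unset Strict Implicit.
Unset Printing Implicit Defensive.

Local Open Scope classical_set_scope.

Definition functionally_hausdorff (Y : topologicalType) : Prop :=
  forall x y : Y, x <> y ->
    exists g : Y -> Rdefinitions.R, continuous g /\ g x <> g y.

Definition open_nbhds (X : topologicalType) (x : X) : set (set X) :=
  [set P | open P /\ P x].

(* Ordinals beta <= omega are represented by [option nat]:
   [Some n] is the finite ordinal n and [None] is omega. *)
Definition omega_hull (Y : topologicalType) (A U : set Y) : Prop :=
  exists Ub : option nat -> set Y,
    (forall b, open (Ub b) /\ A `<=` Ub b) /\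
    (forall n : nat, closure (Ub (Some n)) `<=` Ub (Some n.+1)) /\
    U = Ub None /\
    Ub None = \bigcup_(b in [set: option nat]) Ub b.

Definition cl_theta_omega (Y : topologicalType) (M : set Y) : set Y :=
  [set y | forall U, omega_hull [set y] U -> closure U `&` M !=set0].

(* X_{theta^omega}(f^{-1}(V)) for f : S -> Y (f given on X, relevant on S). *)
Definition X_theta_omega (X Y : topologicalType) (S : set X) (f : X -> Y)
    (V : set Y) : set X :=
  [set x | \bigcap_(P in open_nbhds x) cl_theta_omega (f @` (P `&` S)) `<=` V].

(* The theta^omega-cluster set of f at x, C(x) = the intersection over open
   neighbourhoods P of x of cl_theta_omega f(P & S), satisfies
   X_theta_omega(f^-1 V) = {x | C(x) <= V}.  A continuous function h : Y -> R
   with h y1 <> h y2 yields omega-hulls of y1 and y2 with disjoint closures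
   (preimages of small intervals around h y1 and h y2), and this forces C(x)
   to have at most one point under either side of the equivalence.  If g is a
   continuous extension then C(x) = {g x}.  Conversely, the condition on
   closed families, applied to the closures of the sets f(P & S), makes C(x)
   nonempty; choosing g x in C(x) gives C(x) = {g x}, hence
   g^-1 V = X_theta_omega(f^-1 V) is open for open V, and g extends f. *)

From HB Require Import structures.
From mathcomp Require Import all_boot all_order all_algebra.
From mathcomp Require Import all_classical all_reals.
From mathcomp Require Import topology normedtype lra.
From mathcomp Require Import Rstruct Rstruct_topology.
Import Order.TTheory GRing.Theory Num.Theory numFieldTopology.Exports numFieldNormedType.Exports.
Set Implicit Arguments.
Unset Strict Implicit.
Unset Printing Implicit Defensive.

Local Open Scope classical_set_scope.
Local Open Scope ring_scope.

Lemma closure_preimage_subset (T U : topologicalType) (h : T -> U) :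
  continuous h -> forall B, closure (h @^-1` B) `<=` h @^-1` closure B.
Proof.
move=> hc B; have : closed (h @^-1` closure B).
  by apply: preimage_closed => [x _|]; [exact: hc | exact: closed_closure].
rewrite closure_id => ->; apply: closureS => x /=; exact: subset_closure.
Qed.

Section omega_hulls_of_a_real_function.
Variables (R : realType) (Y : topologicalType) (h : Y -> R).
Hypothesis h_cont : continuous h.

Lemma open_preimage_ball (c r : R) : open (h @^-1` ball c r).
Proof. by move/continuousP : h_cont; apply; exact: ball_open. Qed.

Lemma preimage_ball_omega_hull (y : Y) (e : R) : 0 < e ->
  omega_hull [set y] (h @^-1` ball (h y) e).
Proof.
move=> e_gt0; pose r (n : nat) := e - e / n.+2%:R.
have r_gt0 n : 0 < r n.
  by rewrite subr_gt0 ltr_pdivrMr ?ltr0n // ltr_pMr // ltr1n.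
have r_lt n : r n < r n.+1.
  by rewrite ltrD2l ltrN2 ltr_pM2l // ltf_pV2 ?posrE ?ltr0n // ltr_nat.
have r_le n : r n <= e by rewrite gerBl divr_ge0 // ltW.
(* The union defining an omega-hull also ranges over [None], so the finite
   stages only need to lie inside the [e]-ball. *)
exists (fun b => h @^-1` ball (h y) (if b is Some n then r n else e)).
split; [|split; [|split=> //]].
- move=> b; split; first exact: open_preimage_ball.
  by move=> _ ->; apply: ballxx; case: b.
- move=> n z /(closure_preimage_subset h_cont).
  exact: closed_ball_subset.
- rewrite eqEsubset; split=> [z ?|z [[n|] _ //]]; first by exists None.
  exact: le_ball.
Qed.

Lemma omega_hulls_separate (y1 y2 : Y) : h y1 != h y2 ->
  exists U1 U2, [/\ omega_hull [set y1] U1, omega_hull [set y2] U2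
                  & closure U1 `&` closure U2 = set0].
Proof.
rewrite -subr_eq0 -normr_gt0 => d_gt0.
pose e := `|h y1 - h y2| / 3%:R; have e_gt0 : 0 < e by rewrite divr_gt0.
exists (h @^-1` ball (h y1) e), (h @^-1` ball (h y2) e).
split; try exact: preimage_ball_omega_hull.
rewrite -subset0 => z [/(closure_preimage_subset h_cont) + /(closure_preimage_subset h_cont)].
rewrite -![closure (ball _ _)]/(closed_ball _ _) /= !closed_ballE //.
rewrite /closed_ball_ /= => z1; rewrite distrC => z2.
have := ler_distD (h z) (h y1) (h y2).
by rewrite /e in z1 z2 *; lra.
Qed.

End omega_hulls_of_a_real_function.

Local Close Scope ring_scope.

Lemma omega_hull_open_nbhs (Y : topologicalType) (y : Y) (U : set Y) :
  omega_hull [set y] U -> open_nbhs y U.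
Proof. by case=> Ub [/(_ None)[Uo yU] [_ [-> _]]]; split=> //; exact: yU. Qed.

Lemma closure_subset_cl_theta_omega (Y : topologicalType) (M : set Y) :
  closure M `<=` cl_theta_omega M.
Proof.
move=> y clMy U /omega_hull_open_nbhs/open_nbhs_nbhs/clMy[z [Mz Uz]].
by exists z; split=> //; exact: subset_closure.
Qed.

Lemma functionally_hausdorff_omega_hulls (Y : topologicalType) (y1 y2 : Y) :
  functionally_hausdorff Y -> y1 <> y2 ->
  exists U1 U2, [/\ omega_hull [set y1] U1, omega_hull [set y2] U2
                  & closure U1 `&` closure U2 = set0].
Proof.
move=> fH /fH[h [h_cont /eqP]]; exact: omega_hulls_separate.
Qed.

Lemma closure_open_nbhsI_dense (X : topologicalType) (S P : set X) (x : X) :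
  dense S -> open_nbhs x P -> closure (P `&` S) x.
Proof.
move=> dS [Po Px] B; rewrite nbhsE => -[Q [Qo Qx] QB].
have [s [[Ps Qs] Ss]] := dS (P `&` Q) (ex_intro _ x (conj Px Qx)) (openI Po Qo).
by exists s; split=> //; exact: QB.
Qed.

Section theta_cluster.
Variables (X Y : topologicalType) (S : set X) (f : X -> Y).

Definition theta_cluster (x : X) : set Y :=
  \bigcap_(P in open_nbhds x) cl_theta_omega (f @` (P `&` S)).

Lemma X_theta_omega_preimage (g : X -> Y) (V : set Y) :
  (forall x y, theta_cluster x y <-> y = g x) -> X_theta_omega S f V = g @^-1` V.
Proof.
move=> clusterE; apply/seteqP; split=> x /=; first by move=> cV; apply/cV/clusterE.
by move=> Vgx y /clusterE ->.
Qed.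

Lemma theta_cluster_self (s : X) : S s -> theta_cluster s (f s).
Proof.
move=> Ss P [_ Ps]; apply/closure_subset_cl_theta_omega/subset_closure.
by exists s.
Qed.

Lemma theta_cluster_closure_preimage (x : X) (y : Y) (U : set Y) :
  theta_cluster x y -> omega_hull [set y] U -> closure (S `&` f @^-1` closure U) x.
Proof.
move=> cxy yU B; rewrite nbhsE => -[Q [Qo Qx] QB].
have [z [clUz [s [Qs Ss] fsz]]] := cxy Q (conj Qo Qx) U yU.
by exists s; split; [split=> //=; rewrite fsz | exact: QB].
Qed.

Section continuous_extension.
Variable g : X -> Y.
Hypotheses (g_cont : continuous g) (g_ext : forall x, S x -> g x = f x).

Lemma closure_preimage_ext (A : set Y) :
  closed A -> closure (S `&` f @^-1` A) `<=` g @^-1` A.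
Proof.
move=> /closure_id Aclosure x clx; rewrite /= Aclosure.
apply: (closure_preimage_subset g_cont); apply: closureS clx => s [Ss Afs].
by rewrite /= g_ext.
Qed.

Lemma theta_cluster_ext (x : X) : dense S -> theta_cluster x (g x).
Proof.
move=> dS P [Po Px] U /omega_hull_open_nbhs[Uo Ugx].
have gUo : open (g @^-1` U) by move/continuousP: g_cont; apply.
have [s [[Ps Us] Ss]] := dS _ (ex_intro _ x (conj Px Ugx)) (openI Po gUo).
exists (f s); split; last by exists s.
by apply: subset_closure; rewrite -g_ext.
Qed.

Lemma theta_cluster_ext_eq (x : X) (y : Y) :
  functionally_hausdorff Y -> theta_cluster x y -> y = g x.
Proof.
move=> fH cxy; apply: contrapT => /(functionally_hausdorff_omega_hulls fH).
move=> [U1 [U2 [yU1 /omega_hull_open_nbhs[_ U2gx] U12]]].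
have clU1gx : closure U1 (g x).
  apply: (closure_preimage_ext (@closed_closure _ U1)).
  exact: theta_cluster_closure_preimage cxy yU1.
suff : (closure U1 `&` closure U2) (g x) by rewrite U12.
by split=> //; exact: subset_closure.
Qed.

End continuous_extension.

Section extension_from_conditions.
Hypotheses (fH : functionally_hausdorff Y) (dS : dense S).
Hypothesis closed_family_preimage :
  forall (I : Type) (A : I -> set Y),
    (forall i, closed (A i)) ->
    \bigcap_(i in [set: I]) A i = set0 ->
    \bigcap_(i in [set: I]) closure (S `&` f @^-1` (A i)) = set0.

Lemma closure_preimage_disjoint (A B : set Y) :
  closed A -> closed B -> A `&` B = set0 ->
  closure (S `&` f @^-1` A) `&` closure (S `&` f @^-1` B) = set0.
Proof.
move=> Acl Bcl AB0; pose AB (b : bool) := if b then A else B.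
have AB_closed b : closed (AB b) by case: b.
have AB_empty : \bigcap_(b in [set: bool]) AB b = set0.
  by rewrite -subset0 => y ABy; rewrite -AB0; split; [exact: (ABy true)|exact: (ABy false)].
have := closed_family_preimage AB_closed AB_empty.
by rewrite -!subset0 => sub x [clAx clBx]; apply: (sub x); case.
Qed.

Lemma theta_cluster_uniq (x : X) (y1 y2 : Y) :
  theta_cluster x y1 -> theta_cluster x y2 -> y1 = y2.
Proof.
move=> cx1 cx2; apply: contrapT => /(functionally_hausdorff_omega_hulls fH).
move=> [U1 [U2 [yU1 yU2 U12]]].
have /seteqP[/(_ x) + _] :=
  closure_preimage_disjoint (@closed_closure _ U1) (@closed_closure _ U2) U12.
by apply; split; [exact: theta_cluster_closure_preimage cx1 yU1
                 | exact: theta_cluster_closure_preimage cx2 yU2].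
Qed.

Lemma theta_cluster_nonempty (x : X) : theta_cluster x !=set0.
Proof.
pose I := {P : set X | open_nbhds x P}.
pose A (i : I) := closure (f @` (sval i `&` S)).
have A_closed i : closed (A i) by exact: closed_closure.
apply: contrapT => nocluster.
have A_empty : \bigcap_(i in [set: I]) A i = set0.
  rewrite -subset0 => y Ay; apply: nocluster; exists y => P xP.
  exact/closure_subset_cl_theta_omega/(Ay (exist _ P xP)).
suff : (\bigcap_(i in [set: I]) closure (S `&` f @^-1` A i)) x.
  by rewrite (closed_family_preimage A_closed A_empty).
move=> [P xP] _; apply: closureS (closure_open_nbhsI_dense dS xP).
by move=> s [Ps Ss]; split=> //; apply: subset_closure; exists s.
Qed.

Lemma theta_cluster_function : exists g : X -> Y,
  forall x y, theta_cluster x y <-> y = g x.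
Proof.
exists (fun x => projT1 (cid (theta_cluster_nonempty x))) => x y.
have cxg := projT2 (cid (theta_cluster_nonempty x)).
by split=> [cxy|->]; first exact: theta_cluster_uniq cxy cxg.
Qed.

End extension_from_conditions.

End theta_cluster.

Theorem corollary3p5 (X Y : topologicalType) (S : set X) (f : X -> Y) :
  functionally_hausdorff Y ->
  dense S ->
  {within S, continuous f} ->
  ((exists g : X -> Y, continuous g /\ (forall x, S x -> g x = f x)) <->
   ((forall (I : Type) (A : I -> set Y),
       (forall i, closed (A i)) ->
       \bigcap_(i in [set: I]) A i = set0 ->
       \bigcap_(i in [set: I]) closure (S `&` f @^-1` (A i)) = set0) /\
    (forall V : set Y, open V -> open (X_theta_omega S f V)))).
Proof.
move=> fH dS _; split.
- move=> [g [g_cont g_ext]].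
  have clusterE x y : theta_cluster S f x y <-> y = g x.
    split=> [|->]; first exact: theta_cluster_ext_eq.
    exact: theta_cluster_ext.
  split.
  + move=> I A Acl A0; rewrite -subset0 => x clx.
    suff : (\bigcap_(i in [set: I]) A i) (g x) by rewrite A0.
    by move=> i _; exact: (closure_preimage_ext g_cont g_ext (Acl i) (clx i Logic.I)).
  + move=> V Vo; rewrite (X_theta_omega_preimage V clusterE).
    by move/continuousP: g_cont; apply.
- move=> [closed_family open_X_theta].
  have [g clusterE] := theta_cluster_function fH dS closed_family.
  exists g; split.
  + apply/continuousP => V Vo; rewrite -(X_theta_omega_preimage V clusterE).
    exact: open_X_theta.
  + by move=> s Ss; apply/esym/clusterE/theta_cluster_self.
Qed.
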